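(* Let $B$ be an abelian group and $f\colon\mathbb{Z}^2\to B$ a function satisfying, for all $k,l\in\mathbb{Z}$, $$f(k+1,l)+f(k,l+1)+f(k-1,l-1)=f(k-1,l)+f(k,l-1)+f(k+1,l+1).$$ Then there exist functions $\kappa,\lambda,\mu\colon\mathbb{Z}\to B$ such that $f(k,l)=\kappa(k)+\lambda(l)+\mu(k-l)$ for all $k,l\in\mathbb{Z}$. *)

From mathcomp Require Import all_boot all_order all_algebra.
Set Implicit Arguments. Unset Strict Implicit. Unset Printing Implicit Defensive.

From mathcomp Require Import all_boot all_order all_algebra.
From mathcomp Require Import zify.
Import GRing.Theory.
Local Open Scope ring_scope.

(* The hexagon relation says exactly that the mixed second difference
   g(k,l) = f(k+1,l+1) - f(k+1,l) - f(k,l+1) + f(k,l) is invariant under the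
   diagonal shift, so g(k,l) = g(k-l,0).  Writing d(m) = f(m,0) - f(m,1), one has
   g(m,0) = d(m) - d(m+1), which is also the mixed difference of mu(k-l) for any
   discrete antiderivative mu of m |-> d(m+1).  Hence f(k,l) - mu(k-l) has
   vanishing mixed differences, and such a function is a sum kappa(k) + lambda(l). *)

Lemma int_step_invariant_const (T : Type) (u : int -> T) :
  (forall z, u (z + 1) = u z) -> forall z, u z = u 0.
Proof.
move=> uS; elim/int_ind => [//|n IHn|n IHn].
- by rewrite -IHn -addn1 PoszD uS.
- by rewrite -IHn -(uS (- n.+1%:Z)) -addn1 PoszD opprD addrNK.
Qed.

Lemma diag_shift_invariant (T : Type) (g : int -> int -> T) :
  (forall k l, g (k + 1) (l + 1) = g k l) -> forall k l, g k l = g (k - l) 0.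
Proof.
move=> gS k l.
have := @int_step_invariant_const _ (fun t => g (t + (k - l)) t) _ l.
by rewrite [l + _]addrC subrK add0r; apply=> t; rewrite addrAC gS.
Qed.

Section MixedDifference.
Context {B : zmodType}.
Implicit Types (f g : int -> int -> B) (mu : int -> B).

Lemma subrBB (x y z t : B) : (x - y) - (z - t) = (x + t) - (y + z).
Proof. by rewrite opprB addrACA -opprD. Qed.

Lemma subrACA (x y z t : B) : (x - y) - (z - t) = (x - z) - (y - t).
Proof. by rewrite !subrBB [y + z]addrC. Qed.

Lemma subr_eq_subr (x y z t : B) : (x - y = z - t) <-> (x + t = z + y).
Proof.
split=> [e|e]; first by rewrite -[x](subrK y) e addrAC subrK.
by apply/eqP; rewrite subr_eq addrAC -e addrK.
Qed.

Lemma int_antiderivative (D : int -> B) :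
  exists P : int -> B, forall z, P (z + 1) - P z = D z.
Proof.
exists (fun z => match z with
  | Posz n => \sum_(i < n) D i
  | Negz n => - \sum_(i < n.+1) D (Negz i) end).
case=> [n|[|n]].
- by rewrite -[Posz n + 1]PoszD addn1 big_ord_recr addrAC subrr add0r.
- by rewrite /= subnn big_ord0 big_ord1 sub0r opprK.
- have -> : Negz n.+1 + 1 = Negz n by rewrite !NegzE -addn1 PoszD opprD addrNK.
  by rewrite [in X in _ - X]big_ord_recr opprK addKr.
Qed.

Definition mixed_diff f (k l : int) : B :=
  (f (k + 1) (l + 1) - f (k + 1) l) - (f k (l + 1) - f k l).

Lemma mixed_diffB f g k l :
  mixed_diff (fun k l => f k l - g k l) k l = mixed_diff f k l - mixed_diff g k l.
Proof. rewrite /mixed_diff [X in X - _]subrACA [X in _ - X]subrACA; exact: subrACA. Qed.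

Lemma mixed_diff_sub_arg mu k l :
  mixed_diff (fun k l => mu (k - l)) k l
  = (mu (k - l) - mu (k - l - 1)) - (mu (k - l + 1) - mu (k - l)).
Proof.
rewrite /mixed_diff subrACA.
by have [-> -> ->] : [/\ k + 1 - (l + 1) = k - l, k + 1 - l = k - l + 1
                     & k - (l + 1) = k - l - 1] by split; lia.
Qed.

Lemma mixed_diff_eq0_split f :
  (forall k l, mixed_diff f k l = 0) -> forall k l, f k l = f k 0 + (f 0 l - f 0 0).
Proof.
move=> f_mixed0.
have row k l : f (k + 1) l - f k l = f (k + 1) 0 - f k 0.
  apply: (@int_step_invariant_const _ (fun l => f (k + 1) l - f k l)) => {}l.
  by apply/subr0_eq; rewrite subrACA; exact: f_mixed0.
have col k l : f k l - f k 0 = f 0 l - f 0 0.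
  apply: (@int_step_invariant_const _ (fun k => f k l - f k 0)) => {}k.
  by apply/subr0_eq; rewrite subrACA row subrr.
by move=> k l; rewrite -(col k l) addrC subrK.
Qed.

Lemma hexagon_identity (a b c d e F m : B) : a + b + c = d + e + F ->
  (F - a) - (b - m) = (m - e) - (d - c).
Proof.
move=> H; rewrite !subrBB; apply/subr_eq_subr.
rewrite (addrC F) -!addrA; congr (m + _).
by rewrite [RHS]addrC H addrC (addrC e).
Qed.

Lemma hexagon_mixed_diff_shift f :
  (forall k l, f (k + 1) l + f k (l + 1) + f (k - 1) (l - 1)
             = f (k - 1) l + f k (l - 1) + f (k + 1) (l + 1)) ->
  forall k l, mixed_diff f (k + 1) (l + 1) = mixed_diff f k l.
Proof.
move=> hf k l; apply: hexagon_identity.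
by have := hf (k + 1) (l + 1); rewrite !addrK.
Qed.

End MixedDifference.

Theorem proposition8p3 (B : zmodType) (f : int -> int -> B)
  (hf : forall k l : int,
      f (k + 1) l + f k (l + 1) + f (k - 1) (l - 1)
      = f (k - 1) l + f k (l - 1) + f (k + 1) (l + 1)) :
  exists (kappa lambda mu : int -> B),
    forall k l : int, f k l = kappa k + lambda l + mu (k - l).
Proof.
have f_diag k l : mixed_diff f k l = mixed_diff f (k - l) 0.
  by apply: diag_shift_invariant; apply: hexagon_mixed_diff_shift.
have [mu muE] := int_antiderivative (fun m => f (m + 1) 0 - f (m + 1) 1).
pose h k l := f k l - mu (k - l).
have h_mixed0 k l : mixed_diff h k l = 0.
  rewrite mixed_diffB mixed_diff_sub_arg f_diag.
  have := muE (k - l - 1); rewrite subrK => ->.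
  rewrite muE /mixed_diff add0r -(opprB (f _ 0)) -(opprB (f (k - l) 0)) opprK.
  by rewrite [X in X - _]addrC subrr.
exists (fun k => h k 0), (fun l => h 0 l - h 0 0), mu => k l.
by rewrite -(mixed_diff_eq0_split _ h_mixed0) subrK.
Qed.
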